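(* Let $d$ be a positive integer, let $z\in\mathbb{S}^d\subset\mathbb{R}^{d+1}$, and identify $\mathbb{S}^{d-1}$ with $\mathbb{S}^d\cap z^\perp$ (the unit sphere of the $d$-dimensional subspace $z^\perp$). Define $f:\mathbb{S}^{d-1}\to\mathbb{S}^d$ by $$f(x)=\sqrt{\tfrac{d}{d+1}}\,x+\tfrac{1}{\sqrt{d+1}}\,z,$$ and for a Borel probability measure $\mu$ on $\mathbb{S}^{d-1}$ let $\mu_l=f_*\mu$ be its pushforward. Then $\mu$ is balanced and isotropic on $\mathbb{S}^{d-1}$ if and only if $\mu_l$ is isotropic on $\mathbb{S}^d$.
   Context: A Borel probability measure $\nu$ on the unit sphere $\mathbb{S}^{n-1}$ of an $n$-dimensional Euclidean space is isotropic if $\int\langle x,y\rangle^2\,d\nu(x)=\frac1n$ for every unit vector $y$ in that space, and balanced if $\int x\,d\nu(x)=0$. *)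

From HB Require Import structures.
From mathcomp Require Import all_boot all_order all_algebra.
From mathcomp Require Import all_classical all_reals all_analysis.
Import numFieldNormedType.Exports.
Import Order.TTheory GRing.Theory Num.Theory.

Set Implicit Arguments.
Unset Strict Implicit.
Unset Printing Implicit Defensive.

Local Open Scope ring_scope.
Local Open Scope classical_set_scope.

(* Euclidean space R^n is represented by row vectors 'rV[R]_n, equipped with
   the Borel sigma-algebra, i.e. the sigma-algebra generated by the open sets
   of its (product) topology. *)
Definition borelV (R : realType) (n : nat) :=
  g_sigma_algebraType (@open 'rV[R]_n).

Definition dotv (R : realType) (n : nat) (u v : 'rV[R]_n) : R :=
  \sum_(i < n) u 0 i * v 0 i.


Definition usphere_perp (R : realType) (n : nat) (z : 'rV[R]_n) : set 'rV[R]_n :=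
  [set x | dotv x x = 1 /\ dotv x z = 0].

Definition concentrated_on (R : realType) (n : nat)
  (mu : {measure set (borelV R n) -> \bar R}) (S : set 'rV[R]_n) : Prop :=
  mu (~` S) = 0%E.

Definition isotropic (R : realType) (n : nat)
  (mu : {measure set (borelV R n) -> \bar R}) : Prop :=
  forall y : 'rV[R]_n, dotv y y = 1 ->
    (\int[mu]_x ((dotv x y) ^+ 2)%:E = (n%:R^-1)%:E)%E.

Definition isotropic_perp (R : realType) (n : nat) (k : nat) (z : 'rV[R]_n)
  (mu : {measure set (borelV R n) -> \bar R}) : Prop :=
  forall y : 'rV[R]_n, dotv y y = 1 -> dotv y z = 0 ->
    (\int[mu]_x ((dotv x y) ^+ 2)%:E = (k%:R^-1)%:E)%E.

(* balanced: int x dmu(x) = 0, i.e. every coordinate of the (vector) integral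
   vanishes *)
Definition balanced (R : realType) (n : nat)
  (mu : {measure set (borelV R n) -> \bar R}) : Prop :=
  forall i : 'I_n, (\int[mu]_x (x 0 i)%:E = 0)%E.

Definition liftf (R : realType) (d : nat) (z : 'rV[R]_d.+1) (x : 'rV[R]_d.+1)
  : 'rV[R]_d.+1 :=
  Num.sqrt (d%:R / d.+1%:R) *: x + (Num.sqrt d.+1%:R)^-1 *: z.

Section pushforward_lift.
Variables (R : realType) (d : nat) (z : 'rV[R]_d.+1).

Lemma liftf_continuous : continuous (liftf z).
Proof.
move=> x.
apply: (@continuousD _ _ _ (fun x : 'rV[R]_d.+1 => Num.sqrt (d%:R / d.+1%:R) *: x)
  (fun=> (Num.sqrt d.+1%:R)^-1 *: z)).
  exact: continuousZr.
exact: cst_continuous.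
Qed.

Lemma measurable_liftf :
  measurable_fun [set: borelV R d.+1] (liftf z : borelV R d.+1 -> borelV R d.+1).
Proof.
apply: (@measurability _ _ (borelV R d.+1) (borelV R d.+1) setT (liftf z) (@open 'rV[R]_d.+1)) => //.
move=> _ [A oA <-]; rewrite setTI.
apply: sub_sigma_algebra.
by move/continuousP : liftf_continuous; apply.
Qed.

Variable mu : {measure set (borelV R d.+1) -> \bar R}.

Definition lift_measure : set (borelV R d.+1) -> \bar R :=
  pushforward mu (liftf z : borelV R d.+1 -> borelV R d.+1).

Let lift0 : lift_measure set0 = 0%E.
Proof. by rewrite /lift_measure /pushforward preimage_set0 measure0. Qed.

Let lift_ge0 A : (0 <= lift_measure A)%E.
Proof. by rewrite /lift_measure /pushforward; exact: measure_ge0. Qed.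

Let lift_sigma_additive : semi_sigma_additive lift_measure.
Proof.
move=> F mF tF mUF; rewrite /lift_measure /pushforward preimage_bigcup.
apply: measure_semi_sigma_additive.
- by move=> n; rewrite -[X in measurable X]setTI; exact: measurable_liftf.
- apply/trivIsetP => /= i j _ _ ij; rewrite -preimage_setI.
  by move/trivIsetP : tF => /(_ _ _ _ _ ij) ->//; rewrite preimage_set0.
- by rewrite -preimage_bigcup -[X in measurable X]setTI; exact: measurable_liftf.
Qed.

HB.instance Definition _ := isMeasure.Build _ _ _
  lift_measure lift0 lift_ge0 lift_sigma_additive.

End pushforward_lift.

From HB Require Import structures.
From mathcomp Require Import all_boot all_order all_algebra.
From mathcomp Require Import all_classical all_reals all_analysis.
From mathcomp Require Import ring lra measurable_realfun.
Import numFieldNormedType.Exports.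
Import Order.TTheory GRing.Theory Num.Theory.
Set Implicit Arguments.
Unset Strict Implicit.
Unset Printing Implicit Defensive.

Local Open Scope ring_scope.
Local Open Scope classical_set_scope.

(* Write f x = alpha x + beta z with alpha^2 = d/(d+1) and beta^2 = 1/(d+1).
   Expanding the square, the second moment of mu_l in a direction y is
     alpha^2 Q(y) + 2 alpha beta <z,y> L(y) + beta^2 <z,y>^2,
   where L and Q are the first and second moments of mu.  As mu lives on z^perp,
   L and Q only see the component y - <y,z> z of y.  If mu is balanced and
   isotropic then L = 0 and Q(v) = |v|^2/d on z^perp, and the sum collapses to
   1/(d+1).  Conversely, directions y in z^perp force Q = 1/d there, and then the
   direction 3/5 u + 4/5 z isolates the cross term, which forces L(u) = 0. *)

Section dotv.
Variables (R : realType) (n : nat).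
Implicit Types (x y w z : 'rV[R]_n) (c : R).

Lemma dotvC x y : dotv x y = dotv y x.
Proof. by apply: eq_bigr => i _; rewrite mulrC. Qed.

Lemma dotvDl x y w : dotv (x + y) w = dotv x w + dotv y w.
Proof. by rewrite /dotv -big_split; apply: eq_bigr => i _; rewrite mxE mulrDl. Qed.

Lemma dotvZl c x y : dotv (c *: x) y = c * dotv x y.
Proof. by rewrite /dotv mulr_sumr; apply: eq_bigr => i _; rewrite mxE mulrA. Qed.

Lemma dotvNl x y : dotv (- x) y = - dotv x y.
Proof. by rewrite -scaleN1r dotvZl mulN1r. Qed.

Lemma dotvBl x y w : dotv (x - y) w = dotv x w - dotv y w.
Proof. by rewrite dotvDl dotvNl. Qed.

Lemma dotvDr x y w : dotv x (y + w) = dotv x y + dotv x w.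
Proof. by rewrite dotvC dotvDl !(dotvC x). Qed.

Lemma dotvZr c x y : dotv x (c *: y) = c * dotv x y.
Proof. by rewrite dotvC dotvZl dotvC. Qed.

Lemma dotv_delta_mx x (i : 'I_n) : dotv x (delta_mx 0 i) = x 0 i.
Proof.
rewrite /dotv (bigD1 i) //= big1 ?addr0; first by rewrite mxE !eqxx mulr1.
by move=> j ji; rewrite mxE (negbTE ji) andbF mulr0.
Qed.

Lemma dotv_ge0 x : 0 <= dotv x x.
Proof. by rewrite sumr_ge0 // => i _; rewrite -expr2 sqr_ge0. Qed.

Lemma dotv_eq0 x : (dotv x x == 0) = (x == 0).
Proof.
apply/idP/eqP => [|->]; last by rewrite /dotv big1 // => i _; rewrite mxE mul0r.
rewrite psumr_eq0 => [/allP x0|i _]; last by rewrite -expr2 sqr_ge0.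
apply/rowP => i; apply/eqP; rewrite mxE -sqrf_eq0 expr2.
by have := x0 i (mem_index_enum _).
Qed.

Lemma unit_coord_le1 x (i : 'I_n) : dotv x x = 1 -> `|x 0 i| <= 1.
Proof.
move=> x1; rewrite -(ler_sqr (normr_ge0 _) ler01) expr1n real_normK ?num_real //.
rewrite -x1 /dotv (bigD1 i) //= expr2 lerDl.
by rewrite sumr_ge0 // => j _; rewrite -expr2 sqr_ge0.
Qed.

Lemma unit_dotv_le x y : dotv x x = 1 -> `|dotv x y| <= \sum_(i < n) `|y 0 i|.
Proof.
move=> x1; apply: (le_trans (ler_norm_sum _ _ _)); apply: ler_sum => i _.
by rewrite normrM ler_piMl ?unit_coord_le1.
Qed.

Lemma dotv_proj_perp z y : dotv z z = 1 -> dotv (y - dotv y z *: z) z = 0.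
Proof. by move=> z1; rewrite dotvBl dotvZl z1 mulr1 subrr. Qed.

Lemma dotv_proj_perp_self z y : dotv z z = 1 ->
  dotv (y - dotv y z *: z) (y - dotv y z *: z) = dotv y y - dotv y z ^+ 2.
Proof.
move=> z1; rewrite [in LHS]dotvBl dotvZl (dotvC z) dotv_proj_perp // mulr0 subr0.
by rewrite (dotvC y) dotvBl dotvZl (dotvC z) expr2.
Qed.

Lemma dotv_normalize_perp z v : dotv v z = 0 -> v != 0 ->
  exists2 u, dotv u u = 1 /\ dotv u z = 0 & v = Num.sqrt (dotv v v) *: u.
Proof.
rewrite -dotv_eq0 => vz v0; have vv_gt0 : 0 < dotv v v by rewrite lt_def v0 dotv_ge0.
have s0 : Num.sqrt (dotv v v) != 0 by rewrite gt_eqF ?sqrtr_gt0.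
exists ((Num.sqrt (dotv v v))^-1 *: v); last by rewrite scalerA mulfV ?scale1r.
rewrite dotvZl dotvZr mulrA -expr2 exprVn sqr_sqrtr ?ltW // mulVf ?gt_eqF //.
by rewrite dotvZl vz mulr0.
Qed.

End dotv.

Section borel.
Variables (R : realType) (n : nat).
Local Notation V := (borelV R n).

Lemma measurable_fun_continuous (g : 'rV[R]_n -> R) : continuous g ->
  measurable_fun [set: V] (g : V -> R).
Proof.
move=> /continuousP g_cont.
apply: (measurability _ (RGenOpens.measurableE R)) => _ [_ [a [b ->] <-]].
by rewrite setTI; apply: sub_sigma_algebra; apply: g_cont; exact: interval_open.
Qed.

Lemma measurable_coord (i : 'I_n) : measurable_fun [set: V] (fun x : V => x 0 i).
Proof. by apply: measurable_fun_continuous; exact: coord_continuous. Qed.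

Lemma measurable_dotvl (y : 'rV[R]_n) : measurable_fun [set: V] (fun x : V => dotv x y).
Proof.
apply: measurable_sum => i.
by apply: measurable_funM; [exact: measurable_coord | exact: measurable_cst].
Qed.

Lemma measurable_usphere_perp (z : 'rV[R]_n) : measurable (usphere_perp z : set V).
Proof.
have -> : usphere_perp z = (fun x : V => dotv x x) @^-1` [set 1] `&`
                          (fun x : V => dotv x z) @^-1` [set 0] by [].
apply: measurableI; rewrite -[X in measurable X]setTI.
- by apply: measurable_sum => // i; apply: measurable_funM; exact: measurable_coord.
- exact: measurable_dotvl.
Qed.

End borel.

Section concentrated.
Context d (T : measurableType d) (R : realType).
Variables (mu : probability T R) (S : set T).
Hypotheses (mS : measurable S) (muS : mu (~` S) = 0%E).

Lemma ae_concentrated (P : T -> Prop) : (forall x, S x -> P x) -> {ae mu, forall x, P x}.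
Proof.
move=> SP; exists (~` S); split; [exact: measurableC | exact: muS |].
by move=> x /= nPx Sx; exact/nPx/SP.
Qed.

Lemma integrable_bounded_on (g : T -> R) (M : R) : 0 <= M -> measurable_fun setT g ->
  (forall x, S x -> `|g x| <= M) -> mu.-integrable setT (EFin \o g).
Proof.
move=> M0 mg gM; apply/integrableP; split; first exact/measurable_EFinP.
apply: (@le_lt_trans _ _ (\int[mu]_x (cst M%:E) x)%E).
  apply: ae_ge0_le_integral => //.
  - by apply: measurableT_comp => //; exact/measurable_EFinP.
  - by apply: ae_concentrated => x Sx _; rewrite /= lee_fin gM.
by rewrite integral_cst // [X in (_ * X)%E]probability_setT mule1 ltry.
Qed.

Lemma eq_integral_on (g h : T -> \bar R) : measurable_fun setT g ->
  measurable_fun setT h -> (forall x, S x -> g x = h x) ->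
  (\int[mu]_x g x = \int[mu]_x h x)%E.
Proof.
move=> mg mh gh; apply: ae_eq_integral => //.
by apply: ae_concentrated => x Sx _; rewrite gh.
Qed.

End concentrated.

Section lift.
Variables (R : realType) (d : nat) (z : 'rV[R]_d.+1).
Hypothesis z1 : dotv z z = 1.
Variable mu : probability (borelV R d.+1) R.
Hypothesis mu_perp : concentrated_on mu (usphere_perp z).
Local Notation V := (borelV R d.+1).
Local Notation S := (usphere_perp z : set V).

Let mS : measurable S := measurable_usphere_perp z.

Lemma integrable_dotvl y : mu.-integrable setT (fun x : V => (dotv x y)%:E).
Proof.
apply: (integrable_bounded_on mS mu_perp (M := \sum_(i < d.+1) `|y 0 i|)).
- by rewrite sumr_ge0.
- exact: measurable_dotvl.
- by move=> x [x1 _]; exact: unit_dotv_le.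
Qed.

Lemma integrable_dotvl_sqr y : mu.-integrable setT (fun x : V => (dotv x y ^+ 2)%:E).
Proof.
apply: (integrable_bounded_on mS mu_perp (M := (\sum_(i < d.+1) `|y 0 i|) ^+ 2)).
- exact: sqr_ge0.
- by apply: measurable_funX; exact: measurable_dotvl.
- move=> x [x1 _]; rewrite normrX lerXn2r ?nnegrE ?sumr_ge0 //.
  exact: unit_dotv_le.
Qed.

Definition moment1 y := fine (\int[mu]_x (dotv x y)%:E)%E.
Definition moment2 y := fine (\int[mu]_x (dotv x y ^+ 2)%:E)%E.

Lemma moment1E y : (\int[mu]_x (dotv x y)%:E)%E = (moment1 y)%:E.
Proof. by rewrite fineK // integrable_fin_num // integrable_dotvl. Qed.

Lemma moment2E y : (\int[mu]_x (dotv x y ^+ 2)%:E)%E = (moment2 y)%:E.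
Proof. by rewrite fineK // integrable_fin_num // integrable_dotvl_sqr. Qed.

Lemma moment1Z c y : moment1 (c *: y) = c * moment1 y.
Proof.
apply: EFin_inj; rewrite -moment1E EFinM -moment1E.
rewrite -(integralZl measurableT (integrable_dotvl y)).
by apply: eq_integral => x _; rewrite dotvZr EFinM.
Qed.

Lemma moment2Z c y : moment2 (c *: y) = c ^+ 2 * moment2 y.
Proof.
apply: EFin_inj; rewrite -moment2E EFinM -moment2E.
rewrite -(integralZl measurableT (integrable_dotvl_sqr y)).
by apply: eq_integral => x _; rewrite dotvZr exprMn EFinM.
Qed.

Lemma dotv_proj_perp_on x y : S x -> dotv x (y - dotv y z *: z) = dotv x y.
Proof. by move=> [_ xz]; rewrite !(dotvC x) dotvBl dotvZl (dotvC z) xz mulr0 subr0. Qed.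

Lemma moment1_proj_perp y : moment1 (y - dotv y z *: z) = moment1 y.
Proof.
apply: EFin_inj; rewrite -!moment1E.
apply: (eq_integral_on mS mu_perp); try by apply/measurable_EFinP; exact: measurable_dotvl.
by move=> x Sx; rewrite dotv_proj_perp_on.
Qed.

Lemma moment2_proj_perp y : moment2 (y - dotv y z *: z) = moment2 y.
Proof.
apply: EFin_inj; rewrite -!moment2E.
apply: (eq_integral_on mS mu_perp);
  try by apply/measurable_EFinP/measurable_funX; exact: measurable_dotvl.
by move=> x Sx; rewrite dotv_proj_perp_on.
Qed.

Lemma balancedP : balanced mu <-> forall y, moment1 y = 0.
Proof.
split=> [bal y | m0 i]; last first.
  rewrite -[X in (X = _)%E](_ : (\int[mu]_x (dotv x (delta_mx 0 i))%:E)%E = _).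
    by rewrite moment1E m0.
  by apply: eq_integral => x _; rewrite dotv_delta_mx.
have int_coord i : mu.-integrable setT (fun x : V => (x 0 i)%:E).
  apply: (integrable_bounded_on mS mu_perp (M := 1)) => //.
  - exact: measurable_coord.
  - by move=> x [x1 _]; exact: unit_coord_le1.
apply: EFin_inj; rewrite -moment1E.
under eq_integral do rewrite /dotv -sumEFin.
rewrite integral_sum //= => [|i].
- rewrite big1 // => i _; under eq_integral do rewrite EFinM.
  by rewrite integralZr // bal mul0e.
- under eq_fun do rewrite EFinM; exact: integrableZr.
Qed.

Local Notation alpha := (Num.sqrt (d%:R / d.+1%:R) : R).
Local Notation beta := ((Num.sqrt d.+1%:R)^-1 : R).

Lemma lift_moment2 y :
  (\int[lift_measure z mu]_x (dotv x y ^+ 2)%:E)%E =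
  (alpha ^+ 2 * moment2 y + 2 * alpha * beta * dotv z y * moment1 y
   + beta ^+ 2 * dotv z y ^+ 2)%:E.
Proof.
rewrite ge0_integral_pushforward ?preimage_setT //=; first last.
- by move=> x _; rewrite lee_fin sqr_ge0.
- by apply/measurable_EFinP/measurable_funX; exact: measurable_dotvl.
- exact: measurable_liftf.
set t := dotv z y.
under eq_integral => x _.
  have -> : (dotv (liftf z x) y ^+ 2)%:E = ((alpha ^+ 2)%:E * (dotv x y ^+ 2)%:E
      + (2 * alpha * beta * t)%:E * (dotv x y)%:E + (beta ^+ 2 * t ^+ 2)%:E)%E.
    by rewrite /liftf dotvDl !dotvZl -/t -!EFinM -!EFinD; congr EFin; ring.
  over.
have int_sqr := integrableZl measurableT (alpha ^+ 2) (integrable_dotvl_sqr y).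
have int_lin := integrableZl measurableT (2 * alpha * beta * t) (integrable_dotvl y).
rewrite integralD //; [|exact: integrableD|exact: finite_measure_integrable_cst].
rewrite integralD // !integralZl ?integrable_dotvl ?integrable_dotvl_sqr //.
rewrite moment1E moment2E integral_cst // [X in (_ + _ * X)%E]probability_setT.
by rewrite mule1 -!EFinM -!EFinD.
Qed.

Lemma moment2_perp_scale :
  (forall u, dotv u u = 1 -> dotv u z = 0 -> moment2 u = d%:R^-1) ->
  forall v, dotv v z = 0 -> moment2 v = dotv v v / d%:R.
Proof.
move=> m2u v vz; have [->|v0] := eqVneq v 0.
  have /eqP -> : dotv (0 : 'rV[R]_d.+1) 0 == 0 by rewrite dotv_eq0.
  by have := moment2Z 0 0; rewrite scale0r expr2 !mul0r.
have [u [u1 uz] ->] := dotv_normalize_perp vz v0.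
by rewrite moment2Z m2u // dotvZl dotvZr u1 mulr1 -expr2.
Qed.

Lemma moment1_perp_scale :
  (forall u, dotv u u = 1 -> dotv u z = 0 -> moment1 u = 0) ->
  forall v, dotv v z = 0 -> moment1 v = 0.
Proof.
move=> m1u v vz; have [->|v0] := eqVneq v 0.
  by have := moment1Z 0 0; rewrite scale0r mul0r.
by have [u [u1 uz] ->] := dotv_normalize_perp vz v0; rewrite moment1Z m1u ?mulr0.
Qed.

Lemma isotropic_perpP : isotropic_perp d z mu <->
  forall v, dotv v z = 0 -> moment2 v = dotv v v / d%:R.
Proof.
split=> [iso | m2 u u1 uz]; last by rewrite moment2E m2 // u1 mul1r.
by apply: moment2_perp_scale => u u1 uz; apply: EFin_inj; rewrite -moment2E iso.
Qed.

Lemma alpha_sqr : alpha ^+ 2 = d%:R / d.+1%:R.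
Proof. by rewrite sqr_sqrtr // divr_ge0. Qed.

Lemma beta_sqr : beta ^+ 2 = d.+1%:R^-1.
Proof. by rewrite exprVn sqr_sqrtr. Qed.

Hypothesis d_gt0 : (0 < d)%N.

Let d_neq0 : d%:R != 0 :> R. Proof. by rewrite pnatr_eq0 -lt0n. Qed.
Let d1_neq0 : d%:R + 1 != 0 :> R. Proof. by rewrite natr1 pnatr_eq0. Qed.

Lemma lift_isotropic :
  balanced mu -> isotropic_perp d z mu -> isotropic (lift_measure z mu).
Proof.
move=> /balancedP m1 /isotropic_perpP m2 y y1.
rewrite lift_moment2 m1 mulr0 addr0 -moment2_proj_perp m2 ?dotv_proj_perp //.
rewrite dotv_proj_perp_self // y1 alpha_sqr beta_sqr (dotvC z) -natr1.
by congr EFin; field; apply/andP.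
Qed.

Lemma lift_isotropic_unit :
  isotropic (lift_measure z mu) -> forall y, dotv y y = 1 ->
  alpha ^+ 2 * moment2 y + 2 * alpha * beta * dotv z y * moment1 y
    + beta ^+ 2 * dotv z y ^+ 2 = d.+1%:R^-1.
Proof. by move=> iso y y1; apply: EFin_inj; rewrite -lift_moment2 iso. Qed.

Lemma isotropic_perp_of_lift :
  isotropic (lift_measure z mu) -> isotropic_perp d z mu.
Proof.
move=> /lift_isotropic_unit iso u u1 uz; rewrite moment2E; congr EFin.
have := iso u u1; rewrite (dotvC z) uz expr0n /= !(mulr0, mul0r, addr0) alpha_sqr.
rewrite -natr1 => m2u; apply: (@mulfI _ (d%:R / (d%:R + 1))).
  by rewrite mulf_neq0 ?invr_eq0.
by rewrite m2u; field; apply/andP.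
Qed.

Lemma balanced_of_lift : isotropic (lift_measure z mu) -> balanced mu.
Proof.
move=> iso; have /isotropic_perpP m2 := isotropic_perp_of_lift iso.
have {}iso := lift_isotropic_unit iso.
suff m1u u : dotv u u = 1 -> dotv u z = 0 -> moment1 u = 0.
  apply/balancedP => y; rewrite -moment1_proj_perp.
  exact/(moment1_perp_scale m1u)/dotv_proj_perp.
move=> u1 uz; have zu : dotv z u = 0 by rewrite dotvC.
(* (3/5, 4/5) is a rational point of the unit circle with both coordinates
   nonzero: the cross term survives and no square roots appear. *)
pose y := (3 / 5 : R) *: u + (4 / 5 : R) *: z.
have y1 : dotv y y = 1 by rewrite !(dotvDl, dotvDr, dotvZl, dotvZr) u1 uz zu z1; lra.
have zy : dotv z y = 4 / 5 by rewrite dotvDr !dotvZr zu z1; lra.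
have yz_proj : y - dotv y z *: z = (3 / 5 : R) *: u by rewrite dotvC zy addrK.
have := iso y y1.
rewrite -moment2_proj_perp -moment1_proj_perp yz_proj moment1Z moment2Z m2 // u1.
have -> : alpha ^+ 2 * ((3 / 5) ^+ 2 * (1 / d%:R)) = 9 / 25 * d.+1%:R^-1.
  by rewrite alpha_sqr -natr1; field; apply/andP.
rewrite beta_sqr zy => h.
have cross0 : 2 * alpha * beta * (4 / 5) * (3 / 5 * moment1 u) = 0.
  apply: (addIr (d.+1%:R^-1 * (4 / 5) ^+ 2)); apply: (addrI (9 / 25 * d.+1%:R^-1)).
  by rewrite addrA h add0r -natr1; field.
have alpha_neq0 : alpha != 0 by rewrite gt_eqF // sqrtr_gt0 divr_gt0 ?ltr0n.
have beta_neq0 : beta != 0 by rewrite invr_eq0 gt_eqF // sqrtr_gt0 ltr0n.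
apply: (@mulfI _ (24 / 25 * alpha * beta)); first by rewrite !mulf_neq0 //; lra.
by rewrite mulr0 -cross0; field.
Qed.

End lift.

Theorem lemma5p3 (R : realType) (d : nat) (hd : (0 < d)%N)
  (z : 'rV[R]_d.+1) (hz : dotv z z = 1)
  (mu : probability (borelV R d.+1) R)
  (hmu : concentrated_on mu (usphere_perp z)) :
  (balanced mu /\ isotropic_perp d z mu) <-> isotropic (lift_measure z mu).
Proof.
split=> [[bal iso] | iso]; first exact: (lift_isotropic hz hmu hd bal iso).
split; [exact: (balanced_of_lift hz hmu hd iso) | exact: (isotropic_perp_of_lift hmu hd iso)].
Qed.
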